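(* Let $(\mathcal{T},\mathcal{F},\mathcal{S})$ be a tree of fusion systems satisfying $(H)$ with completion $\mathcal{F}_\mathcal{T}$ on $S=\mathcal{S}(v_* )$, and assume (a) $\mathcal{F}(v)$ is saturated for every vertex $v$, and (b) $\mathcal{F}(e)=\mathcal{F}_{\mathcal{S}(e)}(\mathcal{S}(e))$ for every edge $e$. Let $P\trianglelefteq Q\le S$ with $P$ $\mathcal{F}_\mathcal{T}$-centric. If $\operatorname{Rep}_{\mathcal{F}_\mathcal{T}}(P,\mathcal{F})$ is a tree, then the image of the restriction map $\operatorname{res}^Q_P:\operatorname{Rep}_{\mathcal{F}_\mathcal{T}}(Q,\mathcal{F})\to\operatorname{Rep}_{\mathcal{F}_\mathcal{T}}(P,\mathcal{F})$ equals the subgraph $\operatorname{Rep}_{\mathcal{F}_\mathcal{T}}(P,\mathcal{F})^{\operatorname{Aut}_Q(P)}$ fixed by $\operatorname{Aut}_Q(P)$.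
   Context: Maps act on the right; $\alpha\circ\beta$ means first $\alpha$ then $\beta$. Trees of fusion systems, Hypothesis $(H)$ (there is a vertex $v_*$ such that for each vertex $v\ne v_*$ the edge $e$ at $v$ on the path to $v_*$ has $\mathcal{S}(f_{ev}):\mathcal{S}(e)\to\mathcal{S}(v)$ an isomorphism), the identification of all $\mathcal{S}(v),\mathcal{S}(e)$ with subgroups of $S$, and the completion $\mathcal{F}_\mathcal{T}$ (smallest fusion system on $S$ containing all $\mathcal{F}(v)$) are as follows: a tree of fusion systems consists of a finite tree $\mathcal{T}$, finite $p$-groups $\mathcal{S}(v),\mathcal{S}(e)$, fusion systems $\mathcal{F}(v)$ on $\mathcal{S}(v)$, $\mathcal{F}(e)$ on $\mathcal{S}(e)$, and for $v$ incident on $e$ a monomorphism $\mathcal{S}(f_{ev})$ which is an injective morphism of fusion systems $\mathcal{F}(e)\to\mathcal{F}(v)$. $\mathcal{F}_S(S)$ denotes the fusion system whose morphisms are conjugations by elements of $S$. $P$ is $\mathcal{F}$-centric if $C_S(P\varphi)=Z(P\varphi)$ for all $\varphi\in\operatorname{Hom}_\mathcal{F}(P,S)$. Saturation is the standard notion: every fully normalised subgroup is fully centralised and fully automised, and each $\varphi\in\operatorname{Hom}_\mathcal{F}(P,S)$ with $P\varphi$ fully centralised extends to $N_\varphi=\{g\in N_S(P)\mid \varphi^{-1}c_g\varphi\in\operatorname{Aut}_S(P\varphi)\}$. $\operatorname{Rep}_{\mathcal{F}_\mathcal{T}}(P,\mathcal{F})$: vertices are classes $[\alpha]_{\mathcal{F}(v)}$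 of $\alpha\in\operatorname{Hom}_{\mathcal{F}_\mathcal{T}}(P,\mathcal{S}(v))$ where $\alpha\sim\beta$ iff $\alpha\circ\gamma=\beta$ for some $\gamma\in\operatorname{Iso}_{\mathcal{F}(v)}(P\alpha,P\beta)$; edges are classes $[\gamma]_{\mathcal{F}(e)}$ of $\gamma\in\operatorname{Hom}_{\mathcal{F}_\mathcal{T}}(P,\mathcal{S}(e))$ defined similarly with $\mathcal{F}(e)$; the edge $[\gamma]_{\mathcal{F}(e)}$, $e=(v,w)$, joins $[\gamma\circ\iota_{\mathcal{S}(e)}^{\mathcal{S}(v)}]_{\mathcal{F}(v)}$ and $[\gamma\circ\iota_{\mathcal{S}(e)}^{\mathcal{S}(w)}]_{\mathcal{F}(w)}$. The restriction map $\operatorname{res}^Q_P$ sends $[\varphi]_{\mathcal{F}(x)}\mapsto[\varphi|_P]_{\mathcal{F}(x)}$ ($x$ a vertex or edge); it is a graph homomorphism. $\operatorname{Aut}_{\mathcal{F}_\mathcal{T}}(P)$ (hence its subgroup $\operatorname{Aut}_Q(P)$ of conjugations by elements of $Q$) acts on $\operatorname{Rep}_{\mathcal{F}_\mathcal{T}}(P,\mathcal{F})$ by $\psi\cdot[\varphi]_{\mathcal{F}(x)}=[\psi\circ\varphi]_{\mathcal{F}(x)}$. *)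

From HB Require Import structures.
From mathcomp Require Import all_boot all_order all_fingroup all_solvable.
Set Implicit Arguments. Unset Strict Implicit. Unset Printing Implicit Defensive.

Local Open Scope group_scope.

(* Fusion systems.  All groups live inside one finGroupType gT.  A morphism  *)
(* of a fusion system with domain P is represented by a finite function      *)
(* f : {ffun gT -> gT} normalised to be 1 outside P (so that equality of     *)
(* maps P -> S is equality of ffuns).  A fusion system F on S is a boolean   *)
(* predicate  F P f  meaning "f is an F-morphism P -> S"; then               *)
(* Hom_F(P,R) = { f | F P f and f(P) <= R }.  Maps act on the right:        *)
(* cmp P f g is "first f then g".                                            *)
Section Fusion.
Variable gT : finGroupType.
Notation mor := {ffun gT -> gT}.

Definition nmor (P : {set gT}) (f : gT -> gT) : mor :=
  [ffun x => if x \in P then f x else 1].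

Definition cmp (P : {set gT}) (f g : mor) : mor := nmor P (fun x => g (f x)).

Definition conjm (P : {set gT}) (s : gT) : mor := nmor P (fun x => x ^ s).

Definition fpred := {set gT} -> mor -> bool.

Definition hom_into (F : fpred) (P R : {set gT}) (f : mor) : bool :=
  F P f && (f @: P \subset R).

Definition fusion_system (S : {set gT}) (F : fpred) : Prop :=
  [/\ (forall P f, F P f ->
         [&& group_set P, P \subset S, f @: P \subset S & f == nmor P f]),
      (forall P f, F P f ->
         {in P &, {morph f : x y / x * y}} /\ {in P &, injective f}),
      (forall P s, group_set P -> P \subset S -> s \in S -> F P (conjm P s)),
      (forall P R f g, F P f -> F R g -> f @: P \subset R -> F P (cmp P f g)) &
      (forall P f, F P f -> exists2 g, F (f @: P) g & {in P, cancel f g})].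

Definition FS (S : {set gT}) : fpred := fun P f =>
  [&& group_set P, P \subset S & [exists s in S, f == conjm P s]].

Definition fully_normalised (S : {set gT}) (F : fpred) (P : {set gT}) : Prop :=
  forall f, F P f -> #|'N_S(f @: P)| <= #|'N_S(P)|.

Definition fully_centralised (S : {set gT}) (F : fpred) (P : {set gT}) : Prop :=
  forall f, F P f -> #|'C_S(f @: P)| <= #|'C_S(P)|.

Definition AutF (F : fpred) (P : {set gT}) : {set mor} :=
  [set f | F P f & f @: P == P].

Definition AutS (S P : {set gT}) : {set mor} := [set conjm P s | s in 'N_S(P)].

(* Aut_S(P) is a Sylow p-subgroup of Aut_F(P) *)
Definition fully_automised (p : nat) (S : {set gT}) (F : fpred) (P : {set gT}) :=
  AutS S P \subset AutF F P /\ #|AutS S P| = partn #|AutF F P| p.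

(* N_phi = { g in N_S(P) | phi^-1 c_g phi in Aut_S(P phi) } *)
Definition Nphi (S P : {set gT}) (f : mor) : {set gT} :=
  [set g in 'N_S(P) | [exists h in 'N_S(f @: P),
                         [forall x in P, f (x ^ g) == (f x) ^ h]]].

Definition saturated (p : nat) (S : {set gT}) (F : fpred) : Prop :=
  (forall P : {set gT}, group_set P -> P \subset S ->
     fully_normalised S F P -> fully_centralised S F P /\ fully_automised p S F P)
  /\ (forall P f, F P f -> fully_centralised S F (f @: P) ->
        exists2 g, F (Nphi S P f) g & {in P, g =1 f}).

Definition centric (S : {set gT}) (F : fpred) (P : {set gT}) : Prop :=
  forall f, F P f -> 'C_S(f @: P) = 'Z(f @: P).

Definition completion (V : Type) (S : {set gT}) (Fv : V -> fpred) (FT : fpred) :=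
  [/\ fusion_system S FT,
      (forall v P f, Fv v P f -> FT P f) &
      (forall G, fusion_system S G -> (forall v P f, Fv v P f -> G P f) ->
         forall P f, FT P f -> G P f)].

End Fusion.

Section Graph.
Variables (VT ET : finType) (VS : {set VT}) (ES : {set ET}) (ends : ET -> VT * VT).

Fixpoint gwalk (x y : VT) (es : seq ET) : Prop :=
  match es with
  | [::] => x = y
  | e :: es' => e \in ES /\
       exists z, (ends e = (x, z) \/ ends e = (z, x)) /\ gwalk z y es'
  end.

Fixpoint reduced (es : seq ET) : bool :=
  match es with
  | e :: ((e' :: _) as t) => (e != e') && reduced t
  | _ => true
  end.

Definition is_tree : Prop :=
  (forall x y, x \in VS -> y \in VS -> exists es, gwalk x y es) /\
  (forall x es, x \in VS -> gwalk x x es -> reduced es -> es = [::]).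

End Graph.

(* Rep_{F_T}(P, F) for a tree of fusion systems satisfying (H), after the    *)
(* identification of all S(v), S(e) with subgroups of S.  The tree is given  *)
(* rooted at v_* = root by a parent function par; the edge e_v (v != root)   *)
(* joins v and par v, and by (H) S(e_v) = S(v).                              *)
Section Rep.
Variables (gT : finGroupType) (V : finType) (root : V) (par : V -> V).
Variables (Sv Se : V -> {set gT}) (Fv Fe : V -> fpred gT) (FT : fpred gT).
Notation mor := {ffun gT -> gT}.

Definition rclass (Fx : fpred gT) (R P : {set gT}) (a : mor) : {set mor} :=
  [set b | hom_into FT P R b &&
           [exists g, [&& Fx (a @: P) g, g @: (a @: P) == b @: P & cmp P a g == b]]].

Definition RepV (P : {set gT}) : {set V * {set mor}} :=
  [set x | [exists a, hom_into FT P (Sv x.1) a &&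
                      (x.2 == rclass (Fv x.1) (Sv x.1) P a)]].

Definition RepE (P : {set gT}) : {set V * {set mor}} :=
  [set x | (x.1 != root) && [exists a, hom_into FT P (Se x.1) a &&
                      (x.2 == rclass (Fe x.1) (Se x.1) P a)]].

Definition repr_mor (C : {set mor}) : mor := odflt [ffun x => x] [pick a in C].

Definition RepEnds (P : {set gT}) (x : V * {set mor}) :=
  let a := repr_mor x.2 in
  ((x.1, rclass (Fv x.1) (Sv x.1) P a),
   (par x.1, rclass (Fv (par x.1)) (Sv (par x.1)) P a)).

Definition resV (Q P : {set gT}) : {set V * {set mor}} :=
  [set x | [exists a, hom_into FT Q (Sv x.1) a &&
                      (x.2 == rclass (Fv x.1) (Sv x.1) P (nmor P a))]].

Definition resE (Q P : {set gT}) : {set V * {set mor}} :=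
  [set x | (x.1 != root) && [exists a, hom_into FT Q (Se x.1) a &&
                      (x.2 == rclass (Fe x.1) (Se x.1) P (nmor P a))]].

Definition actV (P : {set gT}) (q : gT) (x : V * {set mor}) :=
  (x.1, rclass (Fv x.1) (Sv x.1) P (cmp P (conjm P q) (repr_mor x.2))).

Definition actE (P : {set gT}) (q : gT) (x : V * {set mor}) :=
  (x.1, rclass (Fe x.1) (Se x.1) P (cmp P (conjm P q) (repr_mor x.2))).

Definition fixedV (Q P : {set gT}) : {set V * {set mor}} :=
  [set x in RepV P | [forall q in Q, actV P q x == x]].

Definition fixedE (Q P : {set gT}) : {set V * {set mor}} :=
  [set x in RepE P | [forall q in Q, actE P q x == x]].

End Rep.

From HB Require Import structures.
From mathcomp Require Import all_boot all_order all_fingroup all_solvable.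
Set Implicit Arguments. Unset Strict Implicit. Unset Printing Implicit Defensive.
Local Open Scope group_scope.

(* One inclusion is formal: c_q followed by a|_P equals a|_P followed by the
   conjugation c_{a(q)}, so restricted classes are fixed (res_fixed).  For the
   other, the key step (fixed_edge_lift) shows that an Aut_Q(P)-fixed edge
   [b] with one end a restriction is itself a restriction: fixedness gives
   conjugations in S(e) compatible with b (FS_class_conj), saturation of the
   vertex system extends b to Q (saturated_extension) and centricity of P
   puts the image of the extension in S(e) (extension_image).  Since Rep(P)
   is a tree, Aut_Q(P) fixes the reduced walk from the root vertex (the
   restriction of the inclusion of Q) to any fixed vertex (walk_fixed), and
   the key step propagates along it (walk_propagate). *)

Section NormalisedMaps.
Variable gT : finGroupType.
Notation mor := {ffun gT -> gT}.

Lemma nmorE (P : {set gT}) f x : nmor P f x = if x \in P then f x else 1.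
Proof. by rewrite ffunE. Qed.

Lemma nmor_in (P : {set gT}) f x : x \in P -> nmor P f x = f x.
Proof. by move=> xP; rewrite nmorE xP. Qed.

Lemma cmp_in (P : {set gT}) (f g : mor) x : x \in P -> cmp P f g x = g (f x).
Proof. exact: nmor_in. Qed.

Lemma conjm_in (P : {set gT}) s x : x \in P -> conjm P s x = x ^ s.
Proof. exact: nmor_in. Qed.

Lemma cmp_img (P : {set gT}) (f g : mor) : cmp P f g @: P = g @: (f @: P).
Proof. by rewrite -imset_comp; apply: eq_in_imset => x xP; rewrite cmp_in. Qed.

Lemma conjm_img (P : {set gT}) s : conjm P s @: P = P :^ s.
Proof. by apply: eq_in_imset => x xP; rewrite conjm_in. Qed.

End NormalisedMaps.

Section FusionSystemFacts.
Variables (gT : finGroupType) (R : {group gT}) (F : fpred gT).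
Hypothesis hF : fusion_system R F.

Lemma fs_props P f : F P f ->
  [/\ group_set P, P \subset R, f @: P \subset R & f = nmor P f].
Proof. by case: hF => h _ _ _ _ /h /and4P [? ? ? /eqP]. Qed.

Lemma fs_out P f x : F P f -> x \notin P -> f x = 1.
Proof. by case/fs_props=> _ _ _ -> xP; rewrite nmorE (negbTE xP). Qed.

Lemma fs_morph P f : F P f -> {in P &, {morph f : x y / x * y}}.
Proof. by case: hF => _ h _ _ _ /h []. Qed.

Lemma fs_inj P f : F P f -> {in P &, injective f}.
Proof. by case: hF => _ h _ _ _ /h []. Qed.

Lemma fs_conj P s : group_set P -> P \subset R -> s \in R -> F P (conjm P s).
Proof. by case: hF => _ _ h _ _; apply: h. Qed.

Lemma fs_cmp P P' f g : F P f -> F P' g -> f @: P \subset P' -> F P (cmp P f g).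
Proof. by case: hF => _ _ _ h _; apply: h. Qed.

Lemma fs_inv P f : F P f -> exists2 g, F (f @: P) g & {in P, cancel f g}.
Proof. by case: hF => _ _ _ _ h; apply: h. Qed.

Lemma fs_imgroup P f : F P f -> group_set (f @: P).
Proof. by case/fs_inv=> g /fs_props []. Qed.

Lemma fs_conjg P f x y : F P f -> x \in P -> y \in P -> f (x ^ y) = f x ^ f y.
Proof.
move=> hf xP yP; have [gP _ _ _] := fs_props hf; pose G := Group gP.
have hM := fs_morph hf.
have f1 : f 1 = 1.
  by apply: (mulgI (f 1)); rewrite -hM ?mulg1 ?(group1 G).
have fV z : z \in G -> f z^-1 = (f z)^-1.
  move=> zG; have ziG : z^-1 \in G by rewrite groupV.
  by apply: (mulgI (f z)); rewrite -hM // !mulgV.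
have yiG : y^-1 \in G by rewrite groupV.
have xyG : x * y \in G by rewrite groupM.
by rewrite /conjg -fV // -hM // -hM.
Qed.

End FusionSystemFacts.

Section Classes.
Variables (gT : finGroupType) (S : {group gT}) (FT : fpred gT).
Hypothesis hFT : fusion_system S FT.
Notation mor := {ffun gT -> gT}.

Lemma hom_FT P R (b : mor) : hom_into FT P R b -> FT P b.
Proof. by case/andP. Qed.

Lemma hom_img P R (b : mor) : hom_into FT P R b -> b @: P \subset R.
Proof. by case/andP. Qed.

Lemma hom_val P R (b : mor) x : hom_into FT P R b -> x \in P -> b x \in R.
Proof. by move=> /hom_img sbR xP; apply: (subsetP sbR); apply: imset_f. Qed.

Lemma hom_sub P (R R' : {set gT}) (b : mor) :
  R \subset R' -> hom_into FT P R b -> hom_into FT P R' b.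
Proof. by move=> sRR' /andP [hb sbR]; rewrite /hom_into hb (subset_trans sbR). Qed.

Lemma rclass_mk (Fx : fpred gT) R (P : {set gT}) (a b g : mor) :
  hom_into FT P R b -> Fx (a @: P) g -> {in P, forall x, g (a x) = b x} ->
  b \in rclass FT Fx R P a.
Proof.
move=> hb hg e; rewrite inE hb /=; apply/existsP; exists g.
have bn : b = nmor P b by case/andP: hb => /(fs_props hFT) [].
have ce : cmp P a g = b.
  by apply/ffunP=> x; rewrite bn !nmorE; case: ifP => // xP; rewrite e.
by rewrite hg ce eqxx andbT /= -ce cmp_img.
Qed.

Lemma rclass_get (Fx : fpred gT) R (P : {set gT}) (a b : mor) :
  b \in rclass FT Fx R P a ->
  hom_into FT P R b /\ exists2 g, Fx (a @: P) g & {in P, forall x, g (a x) = b x}.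
Proof.
rewrite inE => /andP [hb /existsP [g /and3P [hg _ /eqP ce]]]; split=> //.
by exists g => // x xP; rewrite -ce cmp_in.
Qed.

Lemma rclass_mono (F1 F2 : fpred gT) (R1 R2 : {set gT}) P (a b : mor) :
  (forall R f, F1 R f -> F2 R f) -> R1 \subset R2 ->
  b \in rclass FT F1 R1 P a -> b \in rclass FT F2 R2 P a.
Proof.
move=> sF sR /rclass_get [hb [g hg e]].
by apply: (rclass_mk (g := g)) => //; [apply: hom_sub hb | apply: sF].
Qed.

Variables (Fx : fpred gT) (Rx : {group gT}).
Hypothesis hFx : fusion_system Rx Fx.

Lemma rclass_refl P (a : mor) : hom_into FT P Rx a -> a \in rclass FT Fx Rx P a.
Proof.
move=> ha; apply: (rclass_mk (g := conjm (a @: P) 1)) => //.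
  apply: (fs_conj hFx); [exact: (fs_imgroup hFT (hom_FT ha)) | exact: hom_img ha | ].
  exact: group1.
by move=> x xP; rewrite conjm_in ?conjg1 //; apply: imset_f.
Qed.

Lemma rclass_sym P (a b : mor) : hom_into FT P Rx a ->
  b \in rclass FT Fx Rx P a -> a \in rclass FT Fx Rx P b.
Proof.
move=> ha /rclass_get [hb [g hg e]]; have [g' hg' gK] := fs_inv hFx hg.
have gab : g @: (a @: P) = b @: P by rewrite -imset_comp; apply: eq_in_imset.
rewrite gab in hg'; apply: (rclass_mk (g := g')) => // x xP.
by rewrite -e // gK //; apply: imset_f.
Qed.

Lemma rclass_trans P (a b c : mor) :
  b \in rclass FT Fx Rx P a -> c \in rclass FT Fx Rx P b ->
  c \in rclass FT Fx Rx P a.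
Proof.
move=> /rclass_get [hb [g hg e]] /rclass_get [hc [h hh e']].
have gab : g @: (a @: P) = b @: P by rewrite -imset_comp; apply: eq_in_imset.
apply: (rclass_mk (g := cmp (a @: P) g h)) => //.
  by apply: (fs_cmp hFx hg hh); rewrite gab.
by move=> x xP; rewrite cmp_in ?e ?e' //; apply: imset_f.
Qed.

Lemma rclass_eq P (a b : mor) : hom_into FT P Rx a ->
  b \in rclass FT Fx Rx P a -> rclass FT Fx Rx P b = rclass FT Fx Rx P a.
Proof.
move=> ha hb; apply/setP=> c; apply/idP/idP; first exact: rclass_trans.
exact: rclass_trans (rclass_sym ha hb).
Qed.

Lemma repr_in P (a : mor) : hom_into FT P Rx a ->
  repr_mor (rclass FT Fx Rx P a) \in rclass FT Fx Rx P a.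
Proof.
move=> ha; rewrite /repr_mor; case: pickP => [b -> //|].
by move/(_ a); rewrite rclass_refl.
Qed.

End Classes.

Section AutQAction.
Variables (gT : finGroupType) (S : {group gT}) (FT : fpred gT).
Hypothesis hFT : fusion_system S FT.
Notation mor := {ffun gT -> gT}.
Variables (P Q : {group gT}).
Hypotheses (hPQ : P <| Q) (hQS : Q \subset S).

Definition cq (q : gT) (f : mor) := cmp P (conjm P q) f.

Lemma memJ_normal q x : q \in Q -> x \in P -> x ^ q \in P.
Proof. by move=> qQ xP; rewrite memJ_norm // (subsetP (normal_norm hPQ)). Qed.

Lemma conj_normal q : q \in Q -> P :^ q = P.
Proof. by move=> qQ; apply/normP; rewrite (subsetP (normal_norm hPQ)). Qed.

Lemma conjm_FT q : q \in Q -> FT P (conjm P q).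
Proof.
move=> qQ; apply: (fs_conj hFT); [exact: groupP | | exact: subsetP hQS q qQ].
exact: subset_trans (normal_sub hPQ) hQS.
Qed.

Lemma cq_val q (b : mor) x : x \in P -> cq q b x = b (x ^ q).
Proof. by move=> xP; rewrite /cq cmp_in // conjm_in. Qed.

Lemma cq_img q (b : mor) : q \in Q -> cq q b @: P = b @: P.
Proof. by move=> qQ; rewrite /cq cmp_img conjm_img conj_normal. Qed.

Lemma cq_hom q (R : {set gT}) (b : mor) :
  q \in Q -> hom_into FT P R b -> hom_into FT P R (cq q b).
Proof.
move=> qQ hb; rewrite /hom_into cq_img // (hom_img hb) andbT.
by apply: (fs_cmp hFT (conjm_FT qQ) (hom_FT hb)); rewrite conjm_img conj_normal.
Qed.

Lemma cq_inv q (b : mor) : q \in Q -> b = nmor P b -> cq q^-1 (cq q b) = b.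
Proof.
move=> qQ bn; apply/ffunP=> x; case xP: (x \in P).
  by rewrite cq_val // cq_val ?memJ_normal ?groupV // conjgKV.
by rewrite bn /cq /cmp !nmorE xP.
Qed.

Lemma res_hom (R : {set gT}) (a : mor) :
  hom_into FT Q R a -> hom_into FT P R (nmor P a).
Proof.
move=> ha; have -> : nmor P a = cq 1 a.
  by apply/ffunP=> x; rewrite /cq /cmp !nmorE; case: ifP; rewrite ?conjm_in ?conjg1.
apply/andP; split.
  apply: (fs_cmp hFT (conjm_FT (group1 Q)) (hom_FT ha)).
  by rewrite conjm_img conjsg1 (normal_sub hPQ).
rewrite cmp_img conjm_img conjsg1; apply: subset_trans (hom_img ha).
exact/imsetS/normal_sub.
Qed.

Variables (Fx : fpred gT) (Rx : {group gT}).
Hypothesis hFx : fusion_system Rx Fx.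

Lemma rclass_act q (b b' : mor) : q \in Q -> hom_into FT P Rx b ->
  b' \in rclass FT Fx Rx P b -> cq q b' \in rclass FT Fx Rx P (cq q b).
Proof.
move=> qQ hb /rclass_get [hb' [g hg e]].
apply: (rclass_mk hFT (g := g)); [exact: cq_hom | by rewrite cq_img |].
by move=> x xP; rewrite !cq_val // e // memJ_normal.
Qed.

(* For a : Q -> R_x, c_q then a|_P equals a|_P then c_{a(q)}, an F_x-map. *)
Lemma res_fixed q (a : mor) : q \in Q -> hom_into FT Q Rx a ->
  rclass FT Fx Rx P (cq q (repr_mor (rclass FT Fx Rx P (nmor P a))))
  = rclass FT Fx Rx P (nmor P a).
Proof.
move=> qQ ha; set a' := nmor P a.
have ha' : hom_into FT P Rx a' := res_hom ha.
apply: (rclass_eq hFT hFx ha').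
apply: (rclass_trans hFT hFx _ (rclass_act qQ ha' (repr_in hFT hFx ha'))).
apply: (rclass_mk hFT (g := conjm (a' @: P) (a q))); first exact: cq_hom.
  apply: (fs_conj hFx); first exact: (fs_imgroup hFT (hom_FT ha')).
    exact: hom_img ha'.
  exact: hom_val ha qQ.
move=> x xP; rewrite conjm_in; last exact: imset_f.
rewrite cq_val // /a' !nmor_in ?memJ_normal //.
by rewrite (fs_conjg hFT (hom_FT ha)) // (subsetP (normal_sub hPQ)).
Qed.

Lemma FS_class_conj (T : {group gT}) q (b : mor) : q \in Q ->
  b \in rclass FT (FS T) T P (cq q b) ->
  exists2 t, t \in T & {in P, forall x, b (x ^ q) = b x ^ t}.
Proof.
move=> qQ /rclass_get [_ [g /and3P [_ _ /exists_inP [s sT /eqP ->]] e]].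
exists s^-1; first exact: groupVr.
move=> x xP; rewrite -(e x xP) conjm_in; last exact: imset_f.
by rewrite cq_val // conjgK.
Qed.

End AutQAction.

(* In a graph
   without nonempty reduced circuits, reduced walks are unique; hence an
   edge-injective graph map fixing the two ends of a reduced walk fixes every
   edge on it. *)
Section Walks.
Variables (VT ET : finType) (VS : {set VT}) (ES : {set ET}) (ends : ET -> VT * VT).
Notation walk := (gwalk ES ends).

Lemma reducedE (s : seq ET) : reduced s = sorted (fun e e' => e != e') s.
Proof. by elim: s => [|e s IH] //; case: s IH => [|e' s] //= ->. Qed.

Lemma reduced_cons2 (e e' : ET) (s : seq ET) :
  reduced [:: e, e' & s] = (e != e') && reduced (e' :: s).
Proof. by []. Qed.

Lemma reduced_behead (e : ET) (s : seq ET) : reduced (e :: s) -> reduced s.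
Proof. by case: s => // e' s; rewrite reduced_cons2 => /andP []. Qed.

Lemma walk_cat x y z w1 w2 : walk x y w1 -> walk y z w2 -> walk x z (w1 ++ w2).
Proof.
elim: w1 x => [|e w1 IH] x /=; first by move=> ->.
by case=> eE [u [hu hw]] h2; split=> //; exists u; split=> //; apply: IH.
Qed.

Lemma walk_rev x y w : walk x y w -> walk y x (rev w).
Proof.
elim: w x => [|e w IH] x /=; first by move=> ->.
case=> eE [u [hu hw]]; rewrite rev_cons -cats1.
apply: walk_cat (IH _ hw) _ => /=; split=> //; exists x; split=> //.
by case: hu; [right | left].
Qed.

Lemma ends_same e x z1 z2 :
  (ends e = (x, z1) \/ ends e = (z1, x)) ->
  (ends e = (x, z2) \/ ends e = (z2, x)) -> z1 = z2.
Proof. by case=> -> [] [] -> //. Qed.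

Lemma walk_reduce x y w : walk x y w -> exists2 w', walk x y w' & reduced w'.
Proof.
elim: w x => [|e w IH] x /=; first by move=> ->; exists [::].
case=> eE [u [hu hw]]; have [[|e' w'] hw' rw'] := IH _ hw.
  by exists [:: e] => //=; split=> //; exists u.
have [ee|ne] := eqVneq e e'.
  move: hw'; rewrite -ee => -[_ [u' [hu' hw'']]].
  exists w'; last exact: reduced_behead rw'.
  by rewrite (ends_same (iffLR (or_comm _ _) hu) hu').
exists [:: e, e' & w'] => /=; first by split=> //; exists u.
by rewrite ne.
Qed.

Lemma walk_propagate (A : VT -> Prop) (good : ET -> Prop) :
  (forall e x z, e \in ES -> good e ->
     (ends e = (x, z) \/ ends e = (z, x)) -> A x -> A z) ->
  forall x y w, walk x y w -> (forall e, e \in w -> good e) -> A x -> A y.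
Proof.
move=> step x y w; elim: w x => [|e w IH] x /=; first by move=> ->.
case=> eE [u [hu hw]] gw Ax; apply: (IH u hw).
  by move=> e' e'w; apply: gw; rewrite in_cons e'w orbT.
exact: step eE (gw e (mem_head _ _)) hu Ax.
Qed.

Hypothesis acyclic : forall x es, x \in VS -> walk x x es -> reduced es -> es = [::].

(* Two distinct reduced walks from x to y would combine into a nonempty
   reduced circuit at y; so reduced walks are determined by their ends. *)
Lemma walk_uniq y w1 w2 x : y \in VS -> walk x y w1 -> walk x y w2 ->
  reduced w1 -> reduced w2 -> w1 = w2.
Proof.
move=> yV; elim: w1 x w2 => [|e1 w1 IH] x [|e2 w2] //.
- move=> xy; have {xy}-> : x = y := xy.
  by move=> h2 _ r2; have := acyclic yV h2 r2.
- move=> h1 xy; have {}xy : x = y := xy.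
  by rewrite xy in h1 => r1; have := acyclic yV h1 r1.
move=> h1 h2 r1 r2; have [ee|ne] := eqVneq e1 e2.
  subst e2; case: h1 => _ [u1 [hu1 hw1]]; case: h2 => _ [u2 [hu2 hw2]].
  rewrite (ends_same hu1 hu2) in hw1.
  by rewrite (IH u2 w2) // ?(reduced_behead r1) ?(reduced_behead r2).
have hc : walk y y (rev (e1 :: w1) ++ e2 :: w2).
  exact: walk_cat (walk_rev (h1 : walk x y (e1 :: w1))) h2.
suff /(acyclic yV hc) : reduced (rev (e1 :: w1) ++ e2 :: w2) by case: (rev _).
have ne_sym : (fun z y : ET => y != z) =2 (fun y z => y != z).
  by move=> ? ?; rewrite eq_sym.
have p1 : path (fun e e' => e != e') e1 w1 by move: r1; rewrite reducedE.
have p2 : path (fun e e' => e != e') e2 w2 by move: r2; rewrite reducedE.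
rewrite reducedE sorted_cat_cons -rev_cons rev_sorted /= p2 andbT.
by rewrite (eq_path ne_sym) p1 ne.
Qed.

Section GraphMap.
Variables (fV : VT -> VT) (fE : ET -> ET).
Hypothesis fES : forall e, e \in ES -> fE e \in ES.
Hypothesis fends : forall e, e \in ES -> ends (fE e) = (fV (ends e).1, fV (ends e).2).
Hypothesis finj : forall e e', e \in ES -> e' \in ES -> fE e = fE e' -> e = e'.

Lemma walk_map x y w : walk x y w -> walk (fV x) (fV y) (map fE w).
Proof.
elim: w x => [|e w IH] x /=; first by move=> ->.
case=> eE [u [hu hw]]; split; first exact: fES.
exists (fV u); split; last exact: IH.
by rewrite fends //; case: hu => ->; [left | right].
Qed.

Lemma reduced_map x y w : walk x y w -> reduced w -> reduced (map fE w).
Proof.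
elim: w x => [|e w IH] x // [eE [u [_ hw]]].
case: w hw IH => [|e' w] // hw IH; rewrite reduced_cons2 => /andP [ne rw].
rewrite !map_cons reduced_cons2 -map_cons (IH _ hw rw) andbT.
case: hw => e'E _.
by apply: contra ne => /eqP /(finj eE e'E) ->.
Qed.

Lemma walk_fixed x y w : y \in VS -> fV x = x -> fV y = y ->
  walk x y w -> reduced w -> forall e, e \in w -> fE e = e.
Proof.
move=> yV fx fy hw rw; have := walk_map hw; rewrite fx fy => hm.
have /eq_in_map fixw : map fE w = map id w.
  by rewrite map_id (walk_uniq yV hm hw (reduced_map hw rw) rw).
exact: fixw.
Qed.

End GraphMap.

End Walks.

Lemma card_center_image (gT : finGroupType) (f : {ffun gT -> gT}) (B : {group gT}) :
  {in B &, {morph f : x y / x * y}} -> {in B &, injective f} ->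
  #|'Z(f @: B)| <= #|'Z(B)|.
Proof.
move=> fM f_inj; apply: leq_trans (leq_imset_card f _).
apply/subset_leq_card/subsetP=> y /setIP [/imsetP [x xB ->] /centP cy].
apply: imset_f; rewrite inE xB; apply/centP => z zB.
by apply: f_inj; rewrite ?groupM // !fM // cy // imset_f.
Qed.

Section CentricExtension.
Variables (gT : finGroupType) (p : nat) (S : {group gT}) (FT : fpred gT).
Hypothesis hFT : fusion_system S FT.
Notation mor := {ffun gT -> gT}.
Variables (P Q : {group gT}).
Hypotheses (hPQ : P <| Q) (hcentric : centric S FT P).

Lemma centric_centraliser (b : mor) : FT P b -> 'C_S(b @: P) \subset b @: P.
Proof. by move=> hb; rewrite (hcentric hb) subsetIl. Qed.

(* If b carries each c_q (q in Q) to conjugation by an element of T, then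
   any F_T-extension a of b to Q maps Q into T: a(q) differs from such a t
   by an element of C_S(b(P)), which lies in b(P) <= T by centricity. *)
Lemma extension_image (T : {group gT}) (a b : mor) :
  T \subset S -> FT Q a -> FT P b -> {in P, a =1 b} -> b @: P \subset T ->
  (forall q, q \in Q -> exists2 t, t \in T & {in P, forall x, b (x ^ q) = b x ^ t}) ->
  a @: Q \subset T.
Proof.
move=> sTS hFTa hFTb eab sbT conjT; apply/subsetP => _ /imsetP [q qQ ->].
have [t tT bJ] := conjT q qQ; have PQ := normal_sub hPQ.
have [_ _ aS _] := fs_props hFT hFTa.
have aqS : a q \in S by apply: (subsetP aS); apply: imset_f.
have tS : t \in S := subsetP sTS t tT.
have cC : a q * t^-1 \in 'C_S(b @: P).
  rewrite inE groupM ?groupV //=; apply/centP => _ /imsetP [x xP ->].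
  have fix_bx : b x ^ (a q * t^-1) = b x.
    have xqP : x ^ q \in P := memJ_normal hPQ qQ xP.
    rewrite conjgM -(eab x xP) -(fs_conjg hFT hFTa (subsetP PQ x xP) qQ).
    by rewrite (eab _ xqP) (eab _ xP) bJ // conjgK.
  by apply: commute_sym; rewrite /commute conjgC fix_bx.
have cT := subsetP sbT _ (subsetP (centric_centraliser hFTb) _ cC).
by rewrite -(mulgKV t (a q)) groupM.
Qed.

Variables (R : {group gT}) (G : fpred gT).
Hypotheses (sRS : R \subset S) (hG : fusion_system R G).
Hypothesis hGT : forall P f, G P f -> FT P f.

Lemma centric_fully_centralised (b : mor) :
  FT P b -> b @: P \subset R -> fully_centralised R G (b @: P).
Proof.
move=> hFTb sbR f hf.
have hbf : FT P (cmp P b f) := fs_cmp hFT hFTb (hGT hf) (subxx _).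
have gB : group_set (b @: P) := fs_imgroup hFT hFTb.
apply: leq_trans (_ : #|'Z(f @: (b @: P))| <= _).
  by rewrite -cmp_img -(hcentric hbf); apply/subset_leq_card/setSI.
apply: leq_trans (card_center_image (B := Group gB) (fs_morph hG hf) (fs_inj hG hf)) _.
exact/subset_leq_card/setSI.
Qed.

Hypothesis hsat : saturated p R G.

(* Let b : P -> R factor as al|_P followed by chi in G, with al defined on Q.
   If each conjugation c_q (q in Q) is carried by b to a conjugation by an
   element of R, then the conjugations by al(Q) on al(P) lie in N_chi, and
   the saturation axiom extends chi to N_chi; composing with al extends b
   to an F_T-morphism on Q. *)
Lemma saturated_extension (al chi b : mor) :
  hom_into FT Q R al -> G (al @: P) chi -> {in P, forall x, chi (al x) = b x} ->
  FT P b ->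
  (forall q, q \in Q -> exists2 t, t \in R & {in P, forall x, b (x ^ q) = b x ^ t}) ->
  exists2 a, FT Q a & {in P, a =1 b}.
Proof.
move=> hal hchi chi_al hFTb conjR; have PQ := normal_sub hPQ.
have hFTal := hom_FT hal.
have chi_img : chi @: (al @: P) = b @: P.
  by rewrite -imset_comp; apply: eq_in_imset.
have alJ q x : q \in Q -> x \in P -> al (x ^ q) = al x ^ al q.
  by move=> qQ xP; apply: (fs_conjg hFT hFTal (subsetP PQ x xP) qQ).
have sN : al @: Q \subset Nphi R (al @: P) chi.
  apply/subsetP => _ /imsetP [q qQ ->]; have [t tR bJ] := conjR q qQ.
  rewrite inE; apply/andP; split.
    rewrite inE (hom_val hal qQ) inE.
    apply/subsetP => _ /imsetP [_ /imsetP [x xP ->] ->].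
    by rewrite -alJ //; exact/imset_f/(memJ_normal hPQ qQ xP).
  apply/exists_inP; exists t.
    rewrite inE tR inE chi_img.
    apply/subsetP => _ /imsetP [_ /imsetP [x xP ->] ->].
    by rewrite -bJ //; exact/imset_f/(memJ_normal hPQ qQ xP).
  apply/forall_inP => _ /imsetP [x xP ->].
  have xqP := memJ_normal hPQ qQ xP.
  by rewrite -alJ // chi_al // chi_al // bJ.
have sbR : b @: P \subset R by rewrite -chi_img; case: (fs_props hG hchi).
have fc : fully_centralised R G (chi @: (al @: P)).
  by rewrite chi_img; apply: centric_fully_centralised.
have [g hg g_chi] := hsat.2 _ _ hchi fc.
exists (cmp Q al g); first exact: (fs_cmp hFT hFTal (hGT hg) sN).
move=> x xP; have xQ := subsetP PQ x xP.
by rewrite cmp_in // g_chi ?chi_al //; apply: imset_f.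
Qed.

End CentricExtension.

Section TreeOfFusionSystems.
Variables (gT : finGroupType) (p : nat) (S : {group gT})
  (V : finType) (root : V) (par : V -> V)
  (Sv Se : V -> {group gT}) (Fv Fe : V -> fpred gT) (FT : fpred gT)
  (P Q : {group gT}).
Hypotheses (hpar : forall v, exists n, iter n par v = root)
  (hSroot : Sv root = S) (hSe : forall v, v != root -> Se v = Sv v)
  (hSesub : forall v, v != root -> (Se v :> {set gT}) \subset Sv (par v))
  (hFv : forall v, fusion_system (Sv v) (Fv v))
  (hFe : forall v, v != root -> fusion_system (Se v) (Fe v))
  (hFeFv : forall v, v != root -> forall R f, Fe v R f -> Fv v R f /\ Fv (par v) R f)
  (hcomp : completion S Fv FT)
  (hsat : forall v, saturated p (Sv v) (Fv v))
  (hFeFS : forall v, v != root -> forall R f, Fe v R f = FS (Se v) R f)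
  (hPQ : P <| Q) (hQS : Q \subset S) (hcentric : centric S FT P).

Notation mor := {ffun gT -> gT}.
Notation SvS := (fun v => Sv v : {set gT}).
Notation SeS := (fun v => Se v : {set gT}).
Notation RepVP := (RepV SvS Fv FT P).
Notation RepEP := (RepE root SeS Fe FT P).
Notation EndsP := (RepEnds par SvS Fv FT P).

Lemma hFT : fusion_system S FT.
Proof. by case: hcomp. Qed.

Lemma hFvT v R f : Fv v R f -> FT R f.
Proof. by case: hcomp => _ h _; apply: h. Qed.

Lemma Sv_sub v : (Sv v :> {set gT}) \subset S.
Proof.
have [n] := hpar v; elim: n v => [|n IH] v; first by move=> /= ->; rewrite hSroot.
rewrite iterSr => /IH sS; have [-> | vr] := eqVneq v root; first by rewrite hSroot.
by apply: subset_trans sS; rewrite -hSe //; apply: hSesub.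
Qed.

Lemma Se_sub_end v w : v != root -> (w = v \/ w = par v) ->
  (Se v :> {set gT}) \subset Sv w.
Proof. by move=> vr [] ->; [rewrite hSe | apply: hSesub]. Qed.

Lemma Fe_sub_end v w R f : v != root -> (w = v \/ w = par v) ->
  Fe v R f -> Fv w R f.
Proof. by move=> vr [] -> /(hFeFv vr) []. Qed.

Lemma resV_fixed x : x \in resV SvS Fv FT Q P -> x \in fixedV SvS Fv FT Q P.
Proof.
case: x => v C; rewrite inE => /existsP [a /andP [ha /eqP /= ->]].
rewrite !inE /=; apply/andP; split.
  by apply/existsP; exists (nmor P a); rewrite (res_hom hFT hPQ hQS ha) eqxx.
apply/forall_inP => q qQ; rewrite /actV /=.
by rewrite -/(cq P q _) (res_fixed hFT hPQ hQS (hFv v) qQ ha).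
Qed.

Lemma resE_fixed x : x \in resE root SeS Fe FT Q P -> x \in fixedE root SeS Fe FT Q P.
Proof.
case: x => v C; rewrite inE => /andP [/= vr /existsP [a /andP [ha /eqP /= ->]]].
rewrite !inE /= vr; apply/andP; split.
  by apply/existsP; exists (nmor P a); rewrite (res_hom hFT hPQ hQS ha) eqxx.
apply/forall_inP => q qQ; rewrite /actE /=.
by rewrite -/(cq P q _) (res_fixed hFT hPQ hQS (hFe vr) qQ ha).
Qed.

Lemma RepE_get v C : (v, C) \in RepEP ->
  v != root /\ exists2 a, hom_into FT P (Se v) a & C = rclass FT (Fe v) (Se v) P a.
Proof.
by rewrite inE => /andP [/= vr /existsP [a /andP [ha /eqP /= ->]]]; split=> //; exists a.
Qed.

Lemma edge_repr v C : (v, C) \in RepEP ->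
  repr_mor C \in C /\ hom_into FT P (Se v) (repr_mor C).
Proof.
case/RepE_get => vr [a ha ->]; have h := repr_in hFT (hFe vr) ha.
by split=> //; case: (rclass_get h).
Qed.

Lemma edge_class v C : (v, C) \in RepEP ->
  C = rclass FT (Fe v) (Se v) P (repr_mor C).
Proof.
move=> he; have [vr [a ha eC]] := RepE_get he; have [hbC _] := edge_repr he.
by rewrite eC in hbC *; rewrite (rclass_eq hFT (hFe vr) ha hbC).
Qed.

Lemma ends_RepV e : e \in RepEP -> (EndsP e).1 \in RepVP.
Proof.
case: e => v C he; have [vr _] := RepE_get he; have [_ hb] := edge_repr he.
rewrite inE /=; apply/existsP; exists (repr_mor C).
by rewrite (hom_sub (Se_sub_end vr (or_introl erefl)) hb) eqxx.
Qed.

Lemma actE_in q e : q \in Q -> e \in RepEP -> actE SeS Fe FT P q e \in RepEP.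
Proof.
case: e => v C qQ he; have [vr _] := RepE_get he; have [_ hb] := edge_repr he.
rewrite inE /= vr /=; apply/existsP; exists (cq P q (repr_mor C)).
by rewrite (cq_hom hFT hPQ hQS qQ hb) eqxx.
Qed.

Lemma actE_inv q e : q \in Q -> e \in RepEP ->
  actE SeS Fe FT P q^-1 (actE SeS Fe FT P q e) = e.
Proof.
case: e => v C qQ he; have [vr _] := RepE_get he; have [_ hb] := edge_repr he.
rewrite /actE /= -/(cq P q _) -/(cq P q^-1 _); congr (_, _).
set b := repr_mor C.
have hbq := cq_hom hFT hPQ hQS qQ hb.
have h := rclass_act hFT hPQ hQS (groupVr qQ) hbq (repr_in hFT (hFe vr) hbq).
have bn : b = nmor P b by case: (fs_props hFT (hom_FT hb)).
rewrite (cq_inv hPQ qQ bn) in h.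
by rewrite (rclass_eq hFT (hFe vr) hb h) -edge_class.
Qed.

Lemma ends_act_end q v C w : q \in Q -> (v, C) \in RepEP -> (w = v \/ w = par v) ->
  rclass FT (Fv w) (Sv w) P
     (repr_mor (rclass FT (Fe v) (Se v) P (cq P q (repr_mor C))))
  = rclass FT (Fv w) (Sv w) P
     (cq P q (repr_mor (rclass FT (Fv w) (Sv w) P (repr_mor C)))).
Proof.
move=> qQ he hw; have [vr _] := RepE_get he; have [_ hb] := edge_repr he.
set b := repr_mor C; have sw := Se_sub_end vr hw.
have hbq := cq_hom hFT hPQ hQS qQ hb.
have hbqw : hom_into FT P (Sv w) (cq P q b) := hom_sub sw hbq.
have h1 := rclass_mono hFT (fun R f => Fe_sub_end vr hw) sw (repr_in hFT (hFe vr) hbq).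
rewrite (rclass_eq hFT (hFv w) hbqw h1).
have hbw : hom_into FT P (Sv w) b := hom_sub sw hb.
have h2 := rclass_act hFT hPQ hQS qQ hbw (repr_in hFT (hFv w) hbw).
by rewrite (rclass_eq hFT (hFv w) hbqw h2).
Qed.

Lemma ends_act q e : q \in Q -> e \in RepEP ->
  EndsP (actE SeS Fe FT P q e) =
  (actV SvS Fv FT P q (EndsP e).1, actV SvS Fv FT P q (EndsP e).2).
Proof.
case: e => v C qQ he; rewrite /RepEnds /actV /actE /= -!/(cq P q _).
by rewrite (ends_act_end qQ he (or_introl erefl)) (ends_act_end qQ he (or_intror erefl)).
Qed.

Definition efixed (e : V * {set mor}) :=
  forall q, q \in Q -> actE SeS Fe FT P q e = e.

(* Let e = [b]_{F(e_v)} be an Aut_Q(P)-fixed edge with an end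
   w in the image of res^Q_P.  Since F(e_v) = F_{S(e_v)}(S(e_v)), each c_q is
   carried by b to a conjugation by some t in S(e_v); saturation of F(w)
   extends b to a : Q -> S, and centricity of P forces a(Q) <= S(e_v). *)
Lemma fixed_edge_lift v C w : (v, C) \in RepEP -> efixed (v, C) ->
  (w = v \/ w = par v) ->
  (w, rclass FT (Fv w) (Sv w) P (repr_mor C)) \in resV SvS Fv FT Q P ->
  exists2 a, hom_into FT Q (Se v) a & nmor P a = repr_mor C.
Proof.
move=> he hfix hw; have [vr _] := RepE_get he; have [hbC hb] := edge_repr he.
set b := repr_mor C in hbC hb *; have hFTb := hom_FT hb.
have sw := Se_sub_end vr hw; have hbw := hom_sub sw hb.
have conjSe q : q \in Q ->
    exists2 t, t \in Se v & {in P, forall x, b (x ^ q) = b x ^ t}.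
  move=> qQ; apply: (FS_class_conj qQ).
  apply: (rclass_mono hFT (F1 := Fe v) _ (subxx _)); first by move=> R f; rewrite hFeFS.
  by case: (hfix q qQ) => ->.
rewrite inE => /existsP [al /andP [hal /eqP /= ecl]].
have : b \in rclass FT (Fv w) (Sv w) P (nmor P al).
  by rewrite -ecl; apply: (rclass_refl hFT (hFv w)).
case/rclass_get => _ [chi hchi chi_al].
have eA : nmor P al @: P = al @: P by apply: eq_in_imset => x xP; rewrite nmor_in.
rewrite eA in hchi.
have [a hFTa eab] : exists2 a, FT Q a & {in P, a =1 b}.
  apply: (saturated_extension hFT hPQ hcentric (Sv_sub w) (hFv w) (@hFvT w) (hsat w) hal hchi) => //.
    by move=> x xP; rewrite -chi_al // nmor_in.
  by move=> q /conjSe [t tSe bJ]; exists t => //; apply: (subsetP sw).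
exists a.
  rewrite /hom_into hFTa; apply: (extension_image hFT hPQ hcentric _ hFTa hFTb eab (hom_img hb) conjSe).
  exact: subset_trans sw (Sv_sub w).
apply/ffunP => x; case xP: (x \in P); first by rewrite nmor_in // eab.
by rewrite nmorE xP (fs_out hFT hFTb) ?xP.
Qed.

Lemma fixed_edge_res v C w : (v, C) \in RepEP -> efixed (v, C) ->
  (w = v \/ w = par v) ->
  (w, rclass FT (Fv w) (Sv w) P (repr_mor C)) \in resV SvS Fv FT Q P ->
  (v, C) \in resE root SeS Fe FT Q P /\
  forall w', (w' = v \/ w' = par v) ->
    (w', rclass FT (Fv w') (Sv w') P (repr_mor C)) \in resV SvS Fv FT Q P.
Proof.
move=> he hfix hw hres; have [a ha ena] := fixed_edge_lift he hfix hw hres.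
have [vr _] := RepE_get he; split.
  rewrite inE /= vr; apply/existsP; exists a.
  by rewrite ha ena -edge_class ?eqxx.
move=> w' hw'; rewrite inE /=; apply/existsP; exists a.
by rewrite (hom_sub (Se_sub_end vr hw') ha) ena eqxx.
Qed.

Lemma res_across_fixed_edge e x z : e \in RepEP -> efixed e ->
  (EndsP e = (x, z) \/ EndsP e = (z, x)) ->
  x \in resV SvS Fv FT Q P -> z \in resV SvS Fv FT Q P.
Proof.
case: e => v C he hfix; rewrite /RepEnds /=.
case=> -[<- <-] hx.
  by have [_] := fixed_edge_res he hfix (or_introl erefl) hx; apply; right.
by have [_] := fixed_edge_res he hfix (or_intror erefl) hx; apply; left.
Qed.

Lemma root_vertex_res :
  (root, rclass FT (Fv root) (Sv root) P (nmor P (conjm Q 1))) \in resV SvS Fv FT Q P.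
Proof.
rewrite inE /=; apply/existsP; exists (conjm Q 1); rewrite eqxx andbT.
have h : FT Q (conjm Q 1) by apply: (fs_conj hFT) => //; apply: groupP.
by rewrite /hom_into h hSroot; case: (fs_props hFT h).
Qed.

Hypothesis htree : is_tree RepVP RepEP EndsP.

(* A fixed vertex y is joined to the fixed root vertex by a reduced walk;
   since Rep(P) is a tree, Aut_Q(P) fixes every edge of that walk, and
   membership in the image of res^Q_P propagates along it. *)
Lemma fixedV_res y : y \in fixedV SvS Fv FT Q P -> y \in resV SvS Fv FT Q P.
Proof.
rewrite inE => /andP [yV /forall_inP yfix].
move: (resV_fixed root_vertex_res); rewrite inE => /andP [x0V /forall_inP x0fix].
case: htree => conn acyclic.
have [w hw] := conn _ _ x0V yV; have [w' hw' rw'] := walk_reduce hw.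
apply: (walk_propagate res_across_fixed_edge hw') root_vertex_res => e ew q qQ.
apply: (walk_fixed acyclic _ _ _ yV _ _ hw' rw' ew).
- by move=> e' he'; apply: actE_in.
- by move=> e' he'; apply: ends_act.
- by move=> e1 e2 h1 h2 ee; rewrite -(actE_inv qQ h1) ee actE_inv.
- exact/eqP/x0fix.
- exact/eqP/yfix.
Qed.

(* A fixed edge has a fixed end, which is a restriction by fixedV_res. *)
Lemma fixedE_res e : e \in fixedE root SeS Fe FT Q P -> e \in resE root SeS Fe FT Q P.
Proof.
rewrite inE => /andP [he /forall_inP efix].
have hfix : efixed e by move=> q qQ; apply/eqP/efix.
have end_fixed : (EndsP e).1 \in fixedV SvS Fv FT Q P.
  rewrite inE ends_RepV //=; apply/forall_inP => q qQ.
  have h := ends_act qQ he; rewrite hfix // in h.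
  by apply/eqP; exact: (esym (congr1 fst h)).
have := fixedV_res end_fixed; case: e he hfix {efix end_fixed} => v C he hfix hres.
by have [] := fixed_edge_res he hfix (or_introl erefl) hres.
Qed.

End TreeOfFusionSystems.

Theorem proposition4p2
  (gT : finGroupType) (p : nat) (S : {group gT})
  (V : finType) (root : V) (par : V -> V)
  (Sv Se : V -> {group gT}) (Fv Fe : V -> fpred gT) (FT : fpred gT)
  (P Q : {group gT}) :
  prime p -> p.-group S ->
  (* the finite tree, rooted at v_* = root *)
  par root = root -> (forall v, exists n, iter n par v = root) ->
  (* identification with subgroups of S = S(v_* ) and hypothesis (H) *)
  Sv root = S ->
  (forall v, v != root -> Se v = Sv v) ->
  (forall v, v != root -> (Se v :> {set gT}) \subset Sv (par v)) ->
  (* tree of fusion systems *)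
  (forall v, fusion_system (Sv v) (Fv v)) ->
  (forall v, v != root -> fusion_system (Se v) (Fe v)) ->
  (forall v, v != root -> forall R f, Fe v R f -> Fv v R f /\ Fv (par v) R f) ->
  completion S Fv FT ->
  (* (a) and (b) *)
  (forall v, saturated p (Sv v) (Fv v)) ->
  (forall v, v != root -> forall R f, Fe v R f = FS (Se v) R f) ->
  P <| Q -> Q \subset S -> centric S FT P ->
  is_tree (RepV (fun v => Sv v : {set gT}) Fv FT P)
          (RepE root (fun v => Se v : {set gT}) Fe FT P)
          (RepEnds par (fun v => Sv v : {set gT}) Fv FT P) ->
  resV (fun v => Sv v : {set gT}) Fv FT Q P = fixedV (fun v => Sv v : {set gT}) Fv FT Q P /\
  resE root (fun v => Se v : {set gT}) Fe FT Q P = fixedE root (fun v => Se v : {set gT}) Fe FT Q P.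
Proof.
move=> _ _ _ hpar hSroot hSe hSesub hFv hFe hFeFv hcomp hsat hFeFS hPQ hQS hcentric htree.
have fixed_res_V := fixedV_res hpar hSroot hSe hSesub hFv hFe hFeFv hcomp
  hsat hFeFS hPQ hQS hcentric htree.
have fixed_res_E := fixedE_res hpar hSroot hSe hSesub hFv hFe hFeFv hcomp
  hsat hFeFS hPQ hQS hcentric htree.
split; apply/setP => x; apply/idP/idP.
- exact: (resV_fixed hFv hcomp hPQ hQS).
- exact: fixed_res_V.
- exact: (resE_fixed hFe hcomp hPQ hQS).
- exact: fixed_res_E.
Qed.
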